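(* Let $(\lambda,\boldsymbol p)\in\nabla$ and $\mu=\mu(\lambda,\boldsymbol p)=\lambda+\sum_ip_i$. If $k<\mu<k+1$ for some integer $k\ge0$, then $$m_+(\lambda,\boldsymbol p\setminus p_1)\le k\le m_-(\lambda,\boldsymbol p)\le m_+(\lambda,\boldsymbol p)\le k+1,$$ where $p_1=\max_ip_i$. If $\mu=k$ for an integer $k$, then $m_+(\lambda,\boldsymbol p)=m_-(\lambda,\boldsymbol p)=k$, unless $(\lambda,\boldsymbol p)=(k-a,1,\dots,1,0,0,\dots)$ with exactly $a$ ones, for some $k\ge1$ and $0\le a<k$, in which case the distribution is a Poisson distribution shifted to $\{a,a+1,\dots\}$ and has the twin mode $\{k-1,k\}$.
   Context: $\nabla=\{(\lambda,\boldsymbol p):\lambda\ge0,\ 1\ge p_1\ge p_2\ge\dots\ge0,\ \sum_ip_i<\infty\}$. For $(\lambda,\boldsymbol p)\in\nabla$ the extended Bernoulli sum is $S=X+\sum_iB_i$ with $X\sim\mathrm{Poisson}(\lambda)$, $B_i\sim\mathrm{Bernoulli}(p_i)$ independent; $f(k;\lambda,\boldsymbol p)=\mathbb P[S=k]$, $f(-1;\cdot)=0$; $\mu(\lambda,\boldsymbol p)=\mathbb E S$. The leading mode $m_+(\lambda,\boldsymbol p)$ is the unique integer $k$ with $f(k-1)\le f(k)>f(k+1)$; $m_-=m_+$ unless $f(m_+-1)=f(m_+)$, in which case $m_-=m_+-1$. $\boldsymbol p\setminus p_1$ denotes $\boldsymbol p$ with the term $p_1$ removed (replaced by $0$). *)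

From Stdlib Require Import Arith Factorial Reals Lra Lia ClassicalEpsilon.
From Coquelicot Require Import Coquelicot.
Open Scope R_scope.

Definition poisson_pmf (lam : R) (k : nat) : R :=
  exp (- lam) * lam ^ k / INR (fact k).

(* Sequences p are indexed from 0: p 0 = p_1, p 1 = p_2, ... *)

Definition in_nabla (lam : R) (p : nat -> R) : Prop :=
  0 <= lam /\ p 0%nat <= 1 /\ (forall i, p (S i) <= p i) /\ (forall i, 0 <= p i)
  /\ ex_series p.

(* pmf of X + B_1 + ... + B_n, X ~ Poisson(lam), B_i ~ Bernoulli(p_i) indep. *)
Fixpoint fin_pmf (lam : R) (p : nat -> R) (n : nat) (k : nat) : R :=
  match n with
  | O => poisson_pmf lam k
  | S m => (1 - p m) * fin_pmf lam p m k
           + p m * (match k with O => 0 | S k' => fin_pmf lam p m k' end)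
  end.

(* f(k; lam, p) = P[S = k] for S = X + sum_i B_i, obtained as the limit of
   P[X + B_1 + ... + B_n = k] (S_n -> S a.s. since sum p_i < oo). *)
Definition ebs_pmf (lam : R) (p : nat -> R) (k : nat) : R :=
  Lim_seq (fun n => fin_pmf lam p n k).

Definition ebs_pmf_pred (lam : R) (p : nat -> R) (k : nat) : R :=
  match k with O => 0 | S k' => ebs_pmf lam p k' end.

Definition ebs_mean (lam : R) (p : nat -> R) : R := lam + Series p.

Definition is_lead_mode (lam : R) (p : nat -> R) (k : nat) : Prop :=
  ebs_pmf_pred lam p k <= ebs_pmf lam p k /\ ebs_pmf lam p (S k) < ebs_pmf lam p k.

Definition m_plus (lam : R) (p : nat -> R) : nat :=
  epsilon (inhabits 0%nat) (is_lead_mode lam p).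

Definition m_minus (lam : R) (p : nat -> R) : nat :=
  let m := m_plus lam p in
  match excluded_middle_informative (ebs_pmf_pred lam p m = ebs_pmf lam p m) with
  | left _ => (m - 1)%nat
  | right _ => m
  end.

(* p \ p_1 : p with the term p_1 replaced by 0. *)
Definition drop_first (p : nat -> R) : nat -> R :=
  fun i => match i with O => 0 | S _ => p i end.

(* The inequalities are proved for the finite sums [S_n = X + B_0 + ... + B_(n-1)] and then
   passed to the limit.  The size-bias identity
     [m P(S_n = m) = lam P(S_n = m - 1) + sum_i p_i P(S_n - B_i = m - 1)]
   writes [m f(m) - mu f(m - 1)] as [sum_i p_i^2 (g_i(m - 1) - g_i(m - 2))], where [g_i] is the
   law of [S_n - B_i].  If [mu >= m] these increments are nonnegative by induction on [m], so [f]
   increases up to the mean.  All the laws involved are log-concave, so the increments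
   [g_i(j) - g_i(j - 1)] change sign only once as [p_i] grows; comparing the sum with
   [sum_i p_i (1 - p_i) (g_i(j) - g_i(j - 1))], which another form of the identity bounds by
   [(mu - j) f(j)], gives [(j + 1) f(j + 1) <= mu f(j)] for [mu <= j], and a variant of it gives
   the bound for [p \ p_1].  In the approximations the Poisson part absorbs the tail
   [sum_(i >= n) p_i], so their mean is exactly [mu] and the non-strict inequalities survive the
   limit.  At an integer mean [k], a [B_i] with
   [0 < p_i < 1] makes [f(k - 1) < f(k)] strict, since removing it leaves a mean strictly between
   [k - 1] and [k]; without such a [B_i] the law is an explicit shifted Poisson law. *)

From Stdlib Require Import Arith Factorial Reals Lra Lia ClassicalEpsilon.
From Coquelicot Require Import Coquelicot.
Open Scope R_scope.

Fixpoint sum_below (n : nat) (g : nat -> R) : R :=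
  match n with O => 0 | S m => sum_below m g + g m end.

Lemma sum_below_ext n g h :
  (forall i, (i < n)%nat -> g i = h i) -> sum_below n g = sum_below n h.
Proof.
  induction n as [|n IH]; intros H; simpl; [reflexivity|].
  rewrite IH by (intros; apply H; lia). rewrite H by lia. reflexivity.
Qed.

Lemma sum_below_le n g h :
  (forall i, (i < n)%nat -> g i <= h i) -> sum_below n g <= sum_below n h.
Proof.
  induction n as [|n IH]; intros H; simpl; [lra|].
  assert (sum_below n g <= sum_below n h) by (apply IH; intros; apply H; lia).
  assert (g n <= h n) by (apply H; lia). lra.
Qed.

Lemma sum_below_minus n g h :
  sum_below n (fun i => g i - h i) = sum_below n g - sum_below n h.
Proof. induction n as [|n IH]; simpl; [ring|]. rewrite IH. ring. Qed.

Lemma sum_below_plus n g h :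
  sum_below n (fun i => g i + h i) = sum_below n g + sum_below n h.
Proof. induction n as [|n IH]; simpl; [ring|]. rewrite IH. ring. Qed.

Lemma sum_below_scal_l n c g : sum_below n (fun i => c * g i) = c * sum_below n g.
Proof. induction n as [|n IH]; simpl; [ring|]. rewrite IH. ring. Qed.

Lemma sum_below_scal_r n g c : sum_below n (fun i => g i * c) = sum_below n g * c.
Proof. induction n as [|n IH]; simpl; [ring|]. rewrite IH. ring. Qed.

Lemma sum_below_zero n : sum_below n (fun _ => 0) = 0.
Proof. induction n as [|n IH]; simpl; [|rewrite IH]; ring. Qed.

Lemma sum_below_nonneg n g : (forall i, (i < n)%nat -> 0 <= g i) -> 0 <= sum_below n g.
Proof. intros H. rewrite <- (sum_below_zero n). apply sum_below_le. exact H. Qed.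

Lemma sum_below_nonpos n g : (forall i, (i < n)%nat -> g i <= 0) -> sum_below n g <= 0.
Proof. intros H. rewrite <- (sum_below_zero n). apply sum_below_le. exact H. Qed.

Lemma sum_below_term_le n g i :
  (forall l, (l < n)%nat -> 0 <= g l) -> (i < n)%nat -> g i <= sum_below n g.
Proof.
  induction n as [|n IH]; intros H Hi; [lia|]. simpl.
  assert (0 <= sum_below n g) by (apply sum_below_nonneg; intros; apply H; lia).
  destruct (Nat.eq_dec i n) as [->|Hne]; [lra|].
  assert (g i <= sum_below n g) by (apply IH; [intros; apply H|]; lia).
  assert (0 <= g n) by (apply H; lia). lra.
Qed.

Lemma sum_below_telescope n u : sum_below n (fun i => u (S i) - u i) = u n - u O.
Proof. induction n as [|n IH]; simpl; [ring|]. rewrite IH. ring. Qed.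

Lemma sum_below_S_sum_n a n : sum_below (S n) a = sum_n a n.
Proof.
  induction n as [|n IH].
  - rewrite sum_O. simpl. lra.
  - rewrite sum_Sn, <- IH. reflexivity.
Qed.

Lemma is_lim_seq_sum_below a : ex_series a -> is_lim_seq (fun n => sum_below n a) (Series a).
Proof.
  intros Ha. apply is_lim_seq_incr_1.
  apply is_lim_seq_ext with (sum_n a); [intros; symmetry; apply sum_below_S_sum_n|].
  exact (Series_correct a Ha).
Qed.

Lemma is_series_of_sum_below a (l : R) : is_lim_seq (fun n => sum_below n a) l -> is_series a l.
Proof.
  intros H. apply is_lim_seq_incr_1 in H.
  apply (is_lim_seq_ext _ (sum_n a)) in H; [exact H | intros; apply sum_below_S_sum_n].
Qed.

Lemma sum_below_le_Series a :
  (forall i, 0 <= a i) -> ex_series a -> forall n, sum_below n a <= Series a.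
Proof.
  intros Ha Hs. apply is_lim_seq_incr_compare; [apply is_lim_seq_sum_below; exact Hs|].
  intros n. simpl. specialize (Ha n). lra.
Qed.

Lemma ex_finite_lim_seq_of_increments (u : nat -> R) :
  ex_series (fun n => u (S n) - u n) -> ex_finite_lim_seq u.
Proof.
  intros Hd. exists (u O + Series (fun n => u (S n) - u n)).
  apply is_lim_seq_ext with (fun n => u O + sum_below n (fun i => u (S i) - u i)).
  - intros n. rewrite sum_below_telescope. ring.
  - apply is_lim_seq_plus'; [apply is_lim_seq_const | apply is_lim_seq_sum_below; exact Hd].
Qed.

Lemma exists_max_active (active : nat -> Prop) (x : nat -> R) n :
  exists t, 0 <= t /\ (forall i, (i < n)%nat -> active i -> x i <= t) /\
            (t = 0 \/ exists i, (i < n)%nat /\ active i /\ t = x i).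
Proof.
  induction n as [|n [t [Ht0 [Hmax Hwit]]]].
  - exists 0. repeat split; [lra | intros; lia | left; reflexivity].
  - destruct (classic (active n /\ t < x n)) as [[Han Hlt]|Hno].
    + exists (x n). repeat split; [lra| |right; exists n; auto].
      intros i Hi Hai. destruct (Nat.eq_dec i n) as [->|Hne]; [lra|].
      assert (x i <= t) by (apply Hmax; auto; lia). lra.
    + exists t. repeat split; [exact Ht0| |].
      * intros i Hi Hai. destruct (Nat.eq_dec i n) as [->|Hne]; [|apply Hmax; auto; lia].
        apply Rnot_lt_le. intros Hlt. apply Hno. auto.
      * destruct Hwit as [->|[i [Hi [Hai ->]]]]; [left; reflexivity|].
        right. exists i. repeat split; auto; lia.
Qed.

(** * Shifts, Bernoulli mixing and log-concavity *)

Definition shift (G : nat -> R) (k : nat) : R :=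
  match k with O => 0 | S k' => G k' end.

Definition mix (q : R) (G : nat -> R) (k : nat) : R := (1 - q) * G k + q * shift G k.

Definition delta (G : nat -> R) (k : nat) : R := G k - shift G k.

Lemma shift_mix q G k : shift (mix q G) k = mix q (shift G) k.
Proof. destruct k; unfold mix; simpl; ring. Qed.

Lemma mix_ext q G G' k : (forall m, G m = G' m) -> mix q G k = mix q G' k.
Proof. intros H. unfold mix. destruct k; simpl; rewrite !H; reflexivity. Qed.

Lemma mix_0 G k : mix 0 G k = G k.
Proof. unfold mix. ring. Qed.

Lemma shift_ext G G' k : (forall m, G m = G' m) -> shift G k = shift G' k.
Proof. intros H. destruct k; simpl; auto. Qed.

Lemma shift_delta G k : shift (delta G) k = shift G k - shift (shift G) k.
Proof. unfold delta. destruct k; simpl; ring. Qed.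

Lemma mix_comm q r G k : mix q (mix r G) k = mix r (mix q G) k.
Proof. destruct k; unfold mix; simpl; ring. Qed.

Lemma shift_nonneg G k : (forall m, 0 <= G m) -> 0 <= shift G k.
Proof. intros H. destruct k; simpl; [lra | apply H]. Qed.

Lemma mix_nonneg q G k : 0 <= q <= 1 -> (forall m, 0 <= G m) -> 0 <= mix q G k.
Proof.
  intros Hq HG. unfold mix.
  assert (0 <= G k) by apply HG. assert (0 <= shift G k) by (apply shift_nonneg; exact HG).
  nra.
Qed.

Lemma mix_abs_le q G B k :
  0 <= q <= 1 -> (forall m, Rabs (G m) <= B m) -> (forall m, B m <= B (S m)) -> 0 <= B O ->
  Rabs (mix q G k) <= B k.
Proof.
  intros Hq HG HB HB0. unfold mix.
  assert (Hs : Rabs (shift G k) <= B k).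
  { destruct k as [|k]; simpl; [rewrite Rabs_R0; lra|].
    apply Rle_trans with (B k); [apply HG | apply HB]. }
  eapply Rle_trans; [apply Rabs_triang|].
  rewrite !Rabs_mult, (Rabs_pos_eq (1 - q)), (Rabs_pos_eq q) by lra.
  specialize (HG k). nra.
Qed.

Definition log_concave (G : nat -> R) : Prop :=
  forall a b, (a <= b)%nat -> shift G a * G (S b) <= G a * G b.

Lemma log_concave_mix q G :
  0 <= q <= 1 -> (forall m, 0 <= G m) -> log_concave G -> log_concave (mix q G).
Proof.
  intros Hq HG HL [|a] b Hab; unfold mix; simpl.
  - rewrite Rmult_0_l. apply Rmult_le_pos; apply mix_nonneg; auto.
  - destruct b as [|b]; [lia|]. simpl.
    assert (L1 := HL (S a) (S b) ltac:(lia)). simpl in L1.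
    assert (L2 := HL a b ltac:(lia)).
    assert (L3 : shift G a * G (S (S b)) <= G (S a) * G b).
    { destruct (Nat.eq_dec a b) as [<-|Hne].
      - assert (H := HL a (S a) ltac:(lia)). lra.
      - assert (H1 := HL (S a) b ltac:(lia)). simpl in H1.
        assert (H2 := HL a (S b) ltac:(lia)). lra. }
    assert (0 <= (1 - q) ^ 2 * (G (S a) * G (S b) - G a * G (S (S b)))) by
      (apply Rmult_le_pos; nra).
    assert (0 <= q ^ 2 * (G a * G b - shift G a * G (S b))) by (apply Rmult_le_pos; nra).
    assert (0 <= q * (1 - q) * (G (S a) * G b - shift G a * G (S (S b)))) by
      (apply Rmult_le_pos; nra).
    nra.
Qed.

(* Mixing with a larger [q] moves mass to the right in likelihood-ratio order. *)

Lemma mix_cross q r H j :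
  log_concave H -> q <= r ->
  shift (mix r H) j * mix q H j <= shift (mix q H) j * mix r H j.
Proof.
  intros HL Hqr. rewrite !shift_mix. unfold mix.
  assert (HLj : shift (shift H) j * H j <= shift H j * shift H j).
  { destruct j as [|j]; simpl; [lra | apply HL; lia]. }
  assert (0 <= (r - q) * (shift H j * shift H j - shift (shift H) j * H j)) by
    (apply Rmult_le_pos; lra).
  nra.
Qed.

Lemma cross_increment_nonneg u0 u1 v0 v1 :
  0 <= u1 -> 0 <= v0 -> u0 * v1 <= v0 * u1 -> v0 < v1 -> u0 <= u1.
Proof. intros. nra. Qed.

Fixpoint cum (G : nat -> R) (k : nat) : R :=
  match k with O => G O | S k' => cum G k' + G (S k') end.

Lemma cum_ext G G' k : (forall m, G m = G' m) -> cum G k = cum G' k.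
Proof. intros H. induction k as [|k IH]; simpl; rewrite ?IH, H; reflexivity. Qed.

Lemma cum_nonneg G k : (forall m, 0 <= G m) -> 0 <= cum G k.
Proof. intros H. induction k as [|k IH]; simpl; [|specialize (H (S k))]; auto; lra. Qed.

Lemma cum_le_S G k : (forall m, 0 <= G m) -> cum G k <= cum G (S k).
Proof. intros H. simpl. specialize (H (S k)). lra. Qed.

Lemma cum_term_le G k : (forall m, 0 <= G m) -> G k <= cum G k.
Proof.
  intros H. destruct k as [|k]; simpl; [lra|].
  assert (0 <= cum G k) by (apply cum_nonneg; exact H). lra.
Qed.

Lemma cum_first_le G k : (forall m, 0 <= G m) -> G O <= cum G k.
Proof.
  intros H. induction k as [|k IH]; [simpl; lra|].
  apply Rle_trans with (cum G k); [exact IH | apply cum_le_S, H].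
Qed.

Lemma cum_zero k : cum (fun _ => 0) k = 0.
Proof. induction k as [|k IH]; simpl; [|rewrite IH]; ring. Qed.

Lemma cum_pos_witness G J : 0 < cum G J -> exists j, (j <= J)%nat /\ 0 < G j.
Proof.
  induction J as [|J IH]; simpl; intros H; [exists O; split; [lia | exact H]|].
  destruct (Rlt_dec 0 (cum G J)) as [Hc|Hc].
  - destruct (IH Hc) as [j [Hj Hpos]]. exists j. split; [lia | exact Hpos].
  - exists (S J). split; [lia | lra].
Qed.

Lemma shift_cum G k : shift (cum G) k = cum G k - G k.
Proof. destruct k; simpl; ring. Qed.

Lemma cum_mix q G k : cum (mix q G) k = mix q (cum G) k.
Proof.
  unfold mix. induction k as [|k IH]; simpl; [ring|].
  rewrite IH, shift_cum. ring.
Qed.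

Lemma poisson_pmf_nonneg lam k : 0 <= lam -> 0 <= poisson_pmf lam k.
Proof.
  intros Hl. unfold poisson_pmf. apply Rmult_le_pos; [apply Rmult_le_pos|].
  - left. apply exp_pos.
  - apply pow_le. exact Hl.
  - left. apply Rinv_0_lt_compat, INR_fact_lt_0.
Qed.

Lemma poisson_pmf_0 lam : poisson_pmf lam O = exp (- lam).
Proof. unfold poisson_pmf. simpl. field. Qed.

Lemma poisson_pmf_S lam k : poisson_pmf lam (S k) = poisson_pmf lam k * lam / INR (S k).
Proof.
  unfold poisson_pmf. rewrite fact_simpl, mult_INR. simpl pow.
  assert (INR (fact k) <> 0) by apply INR_fact_neq_0.
  assert (INR (S k) <> 0) by (apply not_0_INR; lia).
  field. auto.
Qed.

Lemma poisson_pmf_size_bias lam m : INR m * poisson_pmf lam m = lam * shift (poisson_pmf lam) m.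
Proof.
  destruct m as [|m]; simpl shift; [simpl; ring|].
  rewrite poisson_pmf_S. assert (INR (S m) <> 0) by (apply not_0_INR; lia). field. auto.
Qed.

Lemma poisson_log_concave lam : 0 <= lam -> log_concave (poisson_pmf lam).
Proof.
  intros Hl [|a] b Hab; simpl shift.
  - rewrite Rmult_0_l. apply Rmult_le_pos; apply poisson_pmf_nonneg; exact Hl.
  - rewrite !poisson_pmf_S.
    assert (Ha := poisson_pmf_nonneg lam a Hl). assert (Hb := poisson_pmf_nonneg lam b Hl).
    assert (0 <= poisson_pmf lam a * poisson_pmf lam b * lam) by
      (apply Rmult_le_pos; [apply Rmult_le_pos|]; assumption).
    assert (0 < INR (S a)) by (apply lt_0_INR; lia).
    assert (/ INR (S b) <= / INR (S a)) by
      (apply Rinv_le_contravar; [assumption | apply le_INR; lia]).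
    unfold Rdiv.
    replace (poisson_pmf lam a * (poisson_pmf lam b * lam * / INR (S b))) with
      (poisson_pmf lam a * poisson_pmf lam b * lam * / INR (S b)) by ring.
    replace (poisson_pmf lam a * lam * / INR (S a) * poisson_pmf lam b) with
      (poisson_pmf lam a * poisson_pmf lam b * lam * / INR (S a)) by ring.
    apply Rmult_le_compat_l; assumption.
Qed.

Definition prob_seq (p : nat -> R) : Prop := forall i, 0 <= p i <= 1.

Lemma antitone_le (p : nat -> R) i j : (forall l, p (S l) <= p l) -> (i <= j)%nat -> p j <= p i.
Proof.
  intros H Hij. induction Hij as [|j Hij IH]; [lra|].
  apply Rle_trans with (p j); [apply H | exact IH].
Qed.

Lemma in_nabla_prob_seq lam p : in_nabla lam p -> prob_seq p.
Proof.
  intros [_ [Hp0 [Hanti [Hnn _]]]] i. split; [apply Hnn|].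
  apply Rle_trans with (p O); [apply antitone_le; [exact Hanti | lia] | exact Hp0].
Qed.

Definition zero_at (i : nat) (p : nat -> R) (l : nat) : R := if Nat.eqb l i then 0 else p l.

Lemma zero_at_same i p : zero_at i p i = 0.
Proof. unfold zero_at. rewrite Nat.eqb_refl. reflexivity. Qed.

Lemma zero_at_other i p l : l <> i -> zero_at i p l = p l.
Proof. intros H. unfold zero_at. apply Nat.eqb_neq in H. rewrite H. reflexivity. Qed.

Lemma zero_at_comm i l p x : zero_at i (zero_at l p) x = zero_at l (zero_at i p) x.
Proof. unfold zero_at. destruct (Nat.eqb x i), (Nat.eqb x l); reflexivity. Qed.

Lemma drop_first_zero_at p i : drop_first p i = zero_at O p i.
Proof. destruct i; reflexivity. Qed.

Lemma prob_seq_zero_at i p : prob_seq p -> prob_seq (zero_at i p).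
Proof. intros H l. unfold zero_at. destruct (Nat.eqb l i); [lra | apply H]. Qed.

Lemma sum_below_zero_at n i p : (i < n)%nat -> sum_below n (zero_at i p) = sum_below n p - p i.
Proof.
  induction n as [|n IH]; intros Hi; [lia|]. simpl.
  destruct (Nat.eq_dec i n) as [->|Hne].
  - rewrite zero_at_same, (sum_below_ext n (zero_at n p) p)
      by (intros; apply zero_at_other; lia). ring.
  - rewrite IH, zero_at_other by lia. ring.
Qed.

Lemma fin_pmf_S lam p n k : fin_pmf lam p (S n) k = mix (p n) (fin_pmf lam p n) k.
Proof. destruct k; reflexivity. Qed.

Lemma fin_pmf_nonneg lam p n k : 0 <= lam -> prob_seq p -> 0 <= fin_pmf lam p n k.
Proof.
  intros Hl Hp. revert k. induction n as [|n IH]; intros k.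
  - apply poisson_pmf_nonneg. exact Hl.
  - rewrite fin_pmf_S. apply mix_nonneg; auto.
Qed.

Lemma fin_pmf_ext lam p q n k :
  (forall i, (i < n)%nat -> p i = q i) -> fin_pmf lam p n k = fin_pmf lam q n k.
Proof.
  revert k. induction n as [|n IH]; intros k H; [reflexivity|].
  rewrite !fin_pmf_S, H by lia. apply mix_ext. intros m. apply IH. auto.
Qed.

Lemma fin_pmf_log_concave lam p n : 0 <= lam -> prob_seq p -> log_concave (fin_pmf lam p n).
Proof.
  intros Hl Hp. induction n as [|n IH]; [apply poisson_log_concave; exact Hl|].
  intros a b Hab. rewrite !fin_pmf_S.
  replace (shift (fin_pmf lam p (S n)) a) with (shift (mix (p n) (fin_pmf lam p n)) a)
    by (destruct a; [reflexivity | apply fin_pmf_S]).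
  apply log_concave_mix; auto. intros. apply fin_pmf_nonneg; auto.
Qed.

Lemma fin_pmf_zero_at_last lam p n k : fin_pmf lam (zero_at n p) (S n) k = fin_pmf lam p n k.
Proof.
  rewrite fin_pmf_S, zero_at_same. unfold mix.
  rewrite (fin_pmf_ext lam (zero_at n p) p) by (intros; apply zero_at_other; lia). ring.
Qed.

Lemma fin_pmf_remove lam p n i k :
  (i < n)%nat -> fin_pmf lam p n k = mix (p i) (fin_pmf lam (zero_at i p) n) k.
Proof.
  revert k. induction n as [|n IH]; intros k Hi; [lia|].
  rewrite fin_pmf_S. destruct (Nat.eq_dec i n) as [->|Hne].
  - apply mix_ext. intros m. symmetry. apply fin_pmf_zero_at_last.
  - transitivity (mix (p n) (mix (p i) (fin_pmf lam (zero_at i p) n)) k).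
    { apply mix_ext. intros m. apply IH. lia. }
    rewrite mix_comm. apply mix_ext. intros m.
    rewrite fin_pmf_S, zero_at_other by lia. reflexivity.
Qed.

Lemma fin_pmf_size_bias lam p n m :
  INR m * fin_pmf lam p n m =
  lam * shift (fin_pmf lam p n) m
  + sum_below n (fun i => p i * shift (fin_pmf lam (zero_at i p) n) m).
Proof.
  revert m. induction n as [|n IH]; intros m.
  - simpl sum_below. rewrite Rplus_0_r. apply poisson_pmf_size_bias.
  - destruct m as [|m].
    + cbn [shift]. rewrite (sum_below_scal_r _ p 0). simpl INR. ring.
    + cbn [shift sum_below]. rewrite fin_pmf_zero_at_last.
      rewrite (sum_below_ext n _ (fun i => (1 - p n) * (p i * fin_pmf lam (zero_at i p) n m)
                                         + p n * (p i * shift (fin_pmf lam (zero_at i p) n) m))).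
      2: { intros i Hi. rewrite fin_pmf_S, zero_at_other by lia. unfold mix. ring. }
      rewrite sum_below_plus, !sum_below_scal_l, !fin_pmf_S. unfold mix. cbn [shift].
      assert (H1 := IH (S m)). assert (H2 := IH m). cbn [shift] in H1.
      rewrite S_INR in *.
      replace ((INR m + 1) * ((1 - p n) * fin_pmf lam p n (S m) + p n * fin_pmf lam p n m)) with
        ((1 - p n) * ((INR m + 1) * fin_pmf lam p n (S m)) + p n * (INR m * fin_pmf lam p n m)
         + p n * fin_pmf lam p n m) by ring.
      rewrite H1, H2. ring.
Qed.

Lemma fin_pmf_abs_le_cum lam p n k :
  0 <= lam -> prob_seq p -> Rabs (fin_pmf lam p n k) <= cum (poisson_pmf lam) k.
Proof.
  intros Hl Hp.
  assert (Hh : forall m, 0 <= poisson_pmf lam m) by (intros; apply poisson_pmf_nonneg, Hl).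
  revert k. induction n as [|n IH]; intros k.
  - rewrite Rabs_pos_eq by apply Hh. apply cum_term_le. exact Hh.
  - rewrite fin_pmf_S. apply mix_abs_le; auto; [intros; apply cum_le_S, Hh | apply Hh].
Qed.

Lemma fin_pmf_diff_le_poisson_diff lam lam' p n k :
  prob_seq p ->
  Rabs (fin_pmf lam' p n k - fin_pmf lam p n k)
  <= cum (fun m => Rabs (poisson_pmf lam' m - poisson_pmf lam m)) k.
Proof.
  intros Hp. assert (Hh : forall m, 0 <= Rabs (poisson_pmf lam' m - poisson_pmf lam m))
    by (intros; apply Rabs_pos).
  revert k. induction n as [|n IH]; intros k;
    [exact (cum_term_le (fun m => Rabs (poisson_pmf lam' m - poisson_pmf lam m)) k Hh)|].
  replace (fin_pmf lam' p (S n) k - fin_pmf lam p (S n) k)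
    with (mix (p n) (fun m => fin_pmf lam' p n m - fin_pmf lam p n m) k)
    by (rewrite !fin_pmf_S; unfold mix; destruct k; simpl; ring).
  apply mix_abs_le; auto; [intros; apply cum_le_S, Hh | apply cum_nonneg, Hh].
Qed.

Lemma poisson_cum_cum lam J :
  cum (cum (poisson_pmf lam)) J
  = INR (S J) * cum (poisson_pmf lam) J - lam * shift (cum (poisson_pmf lam)) J.
Proof.
  induction J as [|J IH]; [simpl; ring|].
  assert (Hsb := poisson_pmf_size_bias lam (S J)). cbn [shift] in Hsb |- *.
  change (cum (cum (poisson_pmf lam)) (S J))
    with (cum (cum (poisson_pmf lam)) J + cum (poisson_pmf lam) (S J)).
  rewrite IH, shift_cum. cbn [cum]. rewrite !S_INR in *. nra.
Qed.

(* [cum (cum G) J = sum_(m <= J) (J + 1 - m) G m] is [E (J + 1 - S)_+] for [S] with law [G]. *)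
Lemma fin_pmf_cum_cum_ge lam p n J :
  0 <= lam -> prob_seq p ->
  cum (cum (poisson_pmf lam)) J - sum_below n p * cum (poisson_pmf lam) J
  <= cum (cum (fin_pmf lam p n)) J.
Proof.
  intros Hl Hp. set (h := poisson_pmf lam).
  assert (Hh : forall m, 0 <= h m) by (intros; apply poisson_pmf_nonneg, Hl).
  revert J. induction n as [|n IH]; intros J;
    [change (fin_pmf lam p 0) with h; simpl sum_below; lra|].
  rewrite (cum_ext (cum (fin_pmf lam p (S n))) (mix (p n) (cum (fin_pmf lam p n))))
    by (intros; rewrite <- cum_mix; apply cum_ext; intros; apply fin_pmf_S).
  rewrite cum_mix. unfold mix. cbn [sum_below].
  assert (Hshift : shift (cum (cum h)) J - sum_below n p * shift (cum h) J
                   <= shift (cum (cum (fin_pmf lam p n))) J).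
  { destruct J as [|J]; cbn [shift]; [lra | apply IH]. }
  rewrite !shift_cum in *. specialize (IH J).
  assert (0 <= sum_below n p) by (apply sum_below_nonneg; intros; apply Hp).
  assert (0 <= h J) by apply Hh. destruct (Hp n).
  assert (0 <= p n * sum_below n p * h J) by
    (apply Rmult_le_pos; [apply Rmult_le_pos|]; assumption).
  assert (p n * cum h J >= 0) by (apply Rle_ge, Rmult_le_pos; [lra | apply cum_nonneg, Hh]).
  nra.
Qed.

Lemma fin_pmf_cum_cum_lower lam p n J :
  0 <= lam -> prob_seq p -> lam + sum_below n p <= INR (S J) ->
  (INR (S J) - (lam + sum_below n p)) * exp (- (lam + sum_below n p))
  <= cum (cum (fin_pmf lam p n)) J.
Proof.
  intros Hl Hp HJ. set (h := poisson_pmf lam). set (mean := lam + sum_below n p) in *.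
  assert (Hh : forall m, 0 <= h m) by (intros; apply poisson_pmf_nonneg, Hl).
  assert (H := fin_pmf_cum_cum_ge lam p n J Hl Hp).
  rewrite poisson_cum_cum, shift_cum in H. fold h in H.
  assert (Hexp : exp (- mean) <= exp (- lam)).
  { assert (0 <= sum_below n p) by (apply sum_below_nonneg; intros; apply Hp).
    destruct (Req_dec mean lam) as [->|Hne]; [lra|].
    left. apply exp_increasing. unfold mean in *. lra. }
  assert (Hfirst : exp (- lam) <= cum h J) by (rewrite <- poisson_pmf_0; apply cum_first_le, Hh).
  assert (0 <= h J) by apply Hh.
  assert ((INR (S J) - mean) * exp (- mean) <= (INR (S J) - mean) * cum h J)
    by (apply Rmult_le_compat_l; lra).
  assert (0 <= lam * h J) by (apply Rmult_le_pos; lra).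
  unfold mean in *. nra.
Qed.

(** * Monotonicity of the finite sums *)

Section FiniteSums.

Variables (lam : R) (n : nat).
Hypothesis Hlam : 0 <= lam.

Local Notation F p := (fin_pmf lam p n).
Local Notation mean p := (lam + sum_below n p).

Lemma mean_zero_at p i : (i < n)%nat -> mean (zero_at i p) = mean p - p i.
Proof. intros Hi. rewrite sum_below_zero_at by exact Hi. ring. Qed.

Lemma fin_pmf_size_bias_gap p m :
  INR m * F p m - mean p * shift (F p) m =
  sum_below n (fun i => p i ^ 2 * shift (delta (F (zero_at i p))) m).
Proof.
  rewrite fin_pmf_size_bias, Rmult_plus_distr_r, <- sum_below_scal_r.
  transitivity (sum_below n (fun i => p i * shift (F (zero_at i p)) m)
                - sum_below n (fun i => p i * shift (F p) m)); [ring|].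
  rewrite <- sum_below_minus. apply sum_below_ext. intros i Hi.
  assert (E : shift (F p) m = mix (p i) (shift (F (zero_at i p))) m).
  { rewrite <- shift_mix. apply shift_ext. intros. apply fin_pmf_remove. exact Hi. }
  rewrite E, shift_delta. unfold mix. ring.
Qed.

Lemma fin_pmf_mean_gap p k :
  INR k * F p k - mean p * F p k =
  lam * (shift (F p) k - F p k)
  - sum_below n (fun i => p i * (1 - p i) * delta (F (zero_at i p)) k).
Proof.
  rewrite fin_pmf_size_bias, Rmult_plus_distr_r, <- sum_below_scal_r.
  rewrite (sum_below_ext n (fun i => p i * (1 - p i) * delta (F (zero_at i p)) k)
                         (fun i => p i * F p k - p i * shift (F (zero_at i p)) k)),
    sum_below_minus; [ring|].
  intros i Hi. rewrite (fin_pmf_remove lam p n i k Hi). unfold mix, delta. ring.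
Qed.

Lemma fin_pmf_shift_le k :
  forall p, prob_seq p -> INR k <= mean p -> shift (F p) k <= F p k.
Proof.
  induction k as [|k IH]; intros p Hp Hk; [apply fin_pmf_nonneg; auto|].
  cbn [shift].
  assert (Hsum : 0 <= sum_below n (fun i => p i ^ 2 * shift (delta (F (zero_at i p))) (S k))).
  { apply sum_below_nonneg. intros i Hi. cbn [shift]. unfold delta.
    assert (shift (F (zero_at i p)) k <= F (zero_at i p) k).
    { apply IH; [apply prob_seq_zero_at; exact Hp|].
      rewrite mean_zero_at, S_INR in *; auto. specialize (Hp i). lra. }
    apply Rmult_le_pos; [apply pow2_ge_0 | lra]. }
  rewrite <- fin_pmf_size_bias_gap in Hsum. cbn [shift] in Hsum.
  assert (0 <= F p k) by (apply fin_pmf_nonneg; auto).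
  assert (0 < INR (S k)) by (apply lt_0_INR; lia).
  apply Rmult_le_reg_l with (INR (S k)); [assumption | nra].
Qed.

Lemma fin_pmf_removed_increment_nonneg p k i :
  prob_seq p -> INR k <= mean p -> (i < n)%nat ->
  0 <= p i ^ 2 * shift (delta (F (zero_at i p))) k.
Proof.
  intros Hp Hk Hi. apply Rmult_le_pos; [apply pow2_ge_0|].
  destruct k as [|k]; cbn [shift]; [lra|]. unfold delta.
  assert (shift (F (zero_at i p)) k <= F (zero_at i p) k); [|lra].
  apply fin_pmf_shift_le; [apply prob_seq_zero_at; exact Hp|].
  rewrite mean_zero_at, S_INR in *; auto. specialize (Hp i). lra.
Qed.

Lemma fin_pmf_size_bias_gap_nonneg p k :
  prob_seq p -> INR k <= mean p -> mean p * shift (F p) k <= INR k * F p k.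
Proof.
  intros Hp Hk. assert (H := fin_pmf_size_bias_gap p k).
  assert (0 <= sum_below n (fun i => p i ^ 2 * shift (delta (F (zero_at i p))) k)); [|lra].
  apply sum_below_nonneg. intros i Hi. apply fin_pmf_removed_increment_nonneg; auto.
Qed.

Lemma fin_pmf_size_bias_gap_ge_term p k i :
  prob_seq p -> INR k <= mean p -> (i < n)%nat ->
  p i ^ 2 * shift (delta (F (zero_at i p))) k <= INR k * F p k - mean p * shift (F p) k.
Proof.
  intros Hp Hk Hi. rewrite fin_pmf_size_bias_gap.
  apply (sum_below_term_le n (fun i => p i ^ 2 * shift (delta (F (zero_at i p))) k)); [|exact Hi].
  intros l Hl. apply fin_pmf_removed_increment_nonneg; auto.
Qed.

Lemma fin_pmf_removed_delta_nonpos p i j :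
  prob_seq p -> (i < n)%nat -> delta (F p) j < 0 -> delta (F (zero_at i p)) j <= 0.
Proof.
  intros Hp Hi Hdec. unfold delta in *. set (G := F (zero_at i p)).
  assert (Hcross : shift (F p) j * G j <= shift G j * F p j).
  { assert (H := mix_cross 0 (p i) G j).
    rewrite mix_0, (shift_ext (mix 0 G) G) in H by (intros; apply mix_0).
    rewrite (shift_ext (F p) (mix (p i) G)), (fin_pmf_remove lam p n i j Hi)
      by (intros; apply fin_pmf_remove; exact Hi).
    apply H; [|apply Hp]. apply fin_pmf_log_concave; [exact Hlam|]. apply prob_seq_zero_at, Hp. }
  apply Rnot_lt_le. intros Hinc.
  assert (shift (F p) j <= F p j); [|lra].
  apply (cross_increment_nonneg _ _ (shift G j) (G j)); [| |exact Hcross|lra].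
  - apply fin_pmf_nonneg; assumption.
  - apply shift_nonneg. intros. apply fin_pmf_nonneg; [exact Hlam|]. apply prob_seq_zero_at, Hp.
Qed.

Lemma fin_pmf_removed_delta_mono p i l j :
  prob_seq p -> (i < n)%nat -> (l < n)%nat -> p l <= p i ->
  0 < delta (F (zero_at i p)) j -> 0 <= delta (F (zero_at l p)) j.
Proof.
  intros Hp Hi Hl Hli Hinc. destruct (Nat.eq_dec i l) as [<-|Hne]; [lra|].
  unfold delta in *. set (H := F (zero_at i (zero_at l p))).
  assert (El : forall m, F (zero_at l p) m = mix (p i) H m).
  { intros m. rewrite (fin_pmf_remove lam (zero_at l p) n i m Hi), zero_at_other by auto.
    reflexivity. }
  assert (Ei : forall m, F (zero_at i p) m = mix (p l) H m).
  { intros m. rewrite (fin_pmf_remove lam (zero_at i p) n l m Hl), zero_at_other by auto.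
    apply mix_ext. intros. apply fin_pmf_ext. intros. apply zero_at_comm. }
  assert (Hcross := mix_cross (p l) (p i) H j).
  rewrite <- (shift_ext _ _ j El), <- (shift_ext _ _ j Ei), <- El, <- Ei in Hcross.
  assert (shift (F (zero_at l p)) j <= F (zero_at l p) j); [|lra].
  apply (cross_increment_nonneg _ _ (shift (F (zero_at i p)) j) (F (zero_at i p) j));
    [| |apply Hcross|lra].
  - apply fin_pmf_nonneg; [exact Hlam|]. apply prob_seq_zero_at, Hp.
  - apply shift_nonneg. intros. apply fin_pmf_nonneg; [exact Hlam|]. apply prob_seq_zero_at, Hp.
  - apply fin_pmf_log_concave; [exact Hlam|]. apply prob_seq_zero_at, prob_seq_zero_at, Hp.
  - exact Hli.
Qed.

Lemma fin_pmf_separating_level p j s :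
  prob_seq p -> 0 <= s ->
  (forall i, (i < n)%nat -> 0 < delta (F (zero_at i p)) j -> p i <= s) ->
  exists t, 0 <= t <= s /\
    (forall i, (i < n)%nat -> 0 < delta (F (zero_at i p)) j -> p i <= t) /\
    (forall i, (i < n)%nat -> delta (F (zero_at i p)) j < 0 -> t <= p i).
Proof.
  intros Hp Hs Hle.
  destruct (exists_max_active (fun i => 0 < delta (F (zero_at i p)) j) p n)
    as [t [Ht0 [Hmax Hwit]]].
  exists t. repeat split; [exact Ht0| |exact Hmax|].
  - destruct Hwit as [->|[i [Hi [Hai ->]]]]; [exact Hs | apply Hle; assumption].
  - intros i Hi Hneg. destruct Hwit as [->|[i0 [Hi0 [Hai0 ->]]]]; [apply Hp|].
    apply Rnot_lt_le. intros Hlt.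
    assert (0 <= delta (F (zero_at i p)) j); [|lra].
    apply (fin_pmf_removed_delta_mono p i0 i j); auto; lra.
Qed.

Lemma fin_pmf_increment_sum_weighted p j t :
  prob_seq p -> 0 <= delta (F p) j -> 0 <= t ->
  (forall i, (i < n)%nat -> 0 < delta (F (zero_at i p)) j -> p i <= t) ->
  (forall i, (i < n)%nat -> delta (F (zero_at i p)) j < 0 -> t <= p i) ->
  (1 - t) * sum_below n (fun i => p i ^ 2 * delta (F (zero_at i p)) j)
  <= t * (mean p - INR j) * F p j.
Proof.
  intros Hp Hinc Ht Hpos Hneg.
  assert (Hterm : (1 - t) * sum_below n (fun i => p i ^ 2 * delta (F (zero_at i p)) j)
          <= t * sum_below n (fun i => p i * (1 - p i) * delta (F (zero_at i p)) j)).
  { rewrite <- !sum_below_scal_l. apply sum_below_le. intros i Hi.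
    set (d := delta (F (zero_at i p)) j). destruct (Hp i).
    (* the difference of the two sides is [p i * d * (t - p i)] *)
    destruct (Rtotal_order d 0) as [Hd|[Hd|Hd]].
    - specialize (Hneg i Hi Hd). assert (0 <= p i * (- d) * (p i - t)) by
        (apply Rmult_le_pos; [apply Rmult_le_pos|]; lra). nra.
    - rewrite Hd. lra.
    - specialize (Hpos i Hi Hd). assert (0 <= p i * d * (t - p i)) by
        (apply Rmult_le_pos; [apply Rmult_le_pos|]; lra). nra. }
  assert (Hgap := fin_pmf_mean_gap p j).
  assert (lam * (shift (F p) j - F p j) <= 0) by (unfold delta in Hinc; nra).
  assert (0 <= t * (lam * (F p j - shift (F p) j))) by (unfold delta in Hinc; nra).
  nra.
Qed.

Lemma fin_pmf_increment_sum_le p j s :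
  prob_seq p -> 0 <= s < 1 ->
  (forall i, (i < n)%nat -> 0 < delta (F (zero_at i p)) j -> p i <= s) ->
  (1 - s) * sum_below n (fun i => p i ^ 2 * delta (F (zero_at i p)) j)
  <= s * Rmax 0 (mean p - INR j) * F p j.
Proof.
  intros Hp Hs Hle. set (sum := sum_below n _).
  assert (HF : 0 <= F p j) by (apply fin_pmf_nonneg; assumption).
  assert (Hmax : 0 <= Rmax 0 (mean p - INR j)) by apply Rmax_l.
  assert (0 <= s * Rmax 0 (mean p - INR j) * F p j) by
    (apply Rmult_le_pos; [apply Rmult_le_pos|]; lra).
  destruct (Rlt_dec (delta (F p) j) 0) as [Hdec|Hinc].
  - assert (sum <= 0); [|nra].
    apply sum_below_nonpos. intros i Hi.
    assert (delta (F (zero_at i p)) j <= 0) by (apply fin_pmf_removed_delta_nonpos; assumption).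
    assert (0 <= p i ^ 2) by apply pow2_ge_0. nra.
  - destruct (fin_pmf_separating_level p j s Hp (proj1 Hs) Hle) as [t [Ht [Hpos Hneg]]].
    assert (Hw := fin_pmf_increment_sum_weighted p j t Hp ltac:(lra) (proj1 Ht) Hpos Hneg).
    fold sum in Hw.
    assert (mean p - INR j <= Rmax 0 (mean p - INR j)) by apply Rmax_r.
    assert (t * (mean p - INR j) * F p j <= s * Rmax 0 (mean p - INR j) * F p j).
    { apply Rmult_le_compat_r; [exact HF|].
      apply Rle_trans with (t * Rmax 0 (mean p - INR j));
        [apply Rmult_le_compat_l | apply Rmult_le_compat_r]; lra. }
    destruct (Rle_dec sum 0); nra.
Qed.

Lemma fin_pmf_ratio_le_mean_of_active p j :
  prob_seq p -> mean p <= INR j ->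
  (forall i, (i < n)%nat -> 0 < delta (F (zero_at i p)) j -> p i < 1) ->
  INR (S j) * F p (S j) <= mean p * F p j.
Proof.
  intros Hp Hj Hactive.
  destruct (exists_max_active (fun i => 0 < delta (F (zero_at i p)) j) p n)
    as [s [Hs0 [Hmax Hwit]]].
  assert (Hs1 : s < 1) by (destruct Hwit as [->|[i [Hi [Hai ->]]]]; [lra | auto]).
  assert (Hsum := fin_pmf_increment_sum_le p j s Hp (conj Hs0 Hs1) Hmax).
  rewrite Rmax_left in Hsum by lra.
  assert (Hgap := fin_pmf_size_bias_gap p (S j)). cbn [shift] in Hgap.
  assert (sum_below n (fun i => p i ^ 2 * delta (F (zero_at i p)) j) <= 0) by nra.
  lra.
Qed.

Lemma fin_pmf_ratio_le_mean j :
  forall p, prob_seq p -> mean p <= INR j -> INR (S j) * F p (S j) <= mean p * F p j.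
Proof.
  induction j as [|j IH]; intros p Hp Hj;
    apply fin_pmf_ratio_le_mean_of_active; auto; intros i Hi Hinc.
  - assert (p i <= sum_below n p) by (apply sum_below_term_le; auto; intros; apply Hp).
    simpl INR in Hj. lra.
  - (* if [p i = 1], the law without [B_i] has mean at most [j],
       so by [IH] it cannot increase at [S j] *)
    apply Rnot_le_lt. intros Hpi. destruct (Hp i) as [_ Hpi1].
    set (G := F (zero_at i p)).
    assert (HG := IH (zero_at i p) (prob_seq_zero_at i p Hp)). fold G in HG.
    rewrite mean_zero_at, !S_INR in * by exact Hi.
    specialize (HG ltac:(lra)).
    assert (0 <= G j) by (apply fin_pmf_nonneg; [exact Hlam | apply prob_seq_zero_at, Hp]).
    unfold delta in Hinc. cbn [shift] in Hinc. fold G in Hinc.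
    assert ((mean p - p i) * G j <= INR j * G j) by (apply Rmult_le_compat_r; lra).
    assert (INR j * G j <= INR j * G (S j)) by (apply Rmult_le_compat_l; [apply pos_INR | lra]).
    lra.
Qed.

Lemma fin_pmf_ratio_le_mean_plus_bound p j b :
  prob_seq p -> b <= 1 -> (forall i, p i <= b) -> mean p + b <= INR j + 1 ->
  INR (S j) * F p (S j) <= (mean p + b) * F p j.
Proof.
  intros Hp Hb1 Hb Hj. assert (HF : 0 <= F p j) by (apply fin_pmf_nonneg; assumption).
  destruct (Req_dec b 1) as [->|Hb1'].
  - assert (Hstar := fin_pmf_ratio_le_mean j p Hp ltac:(lra)). nra.
  - assert (Hb0 : 0 <= b) by (apply Rle_trans with (p O); [apply Hp | apply Hb]).
    assert (Hsum := fin_pmf_increment_sum_le p j b Hp ltac:(lra) (fun i _ _ => Hb i)).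
    assert (Rmax 0 (mean p - INR j) <= 1 - b) by (apply Rmax_lub; lra).
    assert (Hgap := fin_pmf_size_bias_gap p (S j)). cbn [shift] in Hgap.
    assert (b * Rmax 0 (mean p - INR j) * F p j <= b * (1 - b) * F p j).
    { apply Rmult_le_compat_r; [exact HF|]. apply Rmult_le_compat_l; lra. }
    assert (sum_below n (fun i => p i ^ 2 * delta (F (zero_at i p)) j) <= b * F p j) by nra.
    lra.
Qed.

End FiniteSums.

(** * Passage to the limit *)

Lemma is_lim_seq_le' (u v : nat -> R) (a b : R) :
  (forall n, u n <= v n) -> is_lim_seq u a -> is_lim_seq v b -> a <= b.
Proof. intros H Hu Hv. exact (is_lim_seq_le u v a b H Hu Hv). Qed.

Lemma is_lim_seq_scal_l' (u : nat -> R) (a l : R) :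
  is_lim_seq u l -> is_lim_seq (fun n => a * u n) (a * l).
Proof. intros H. exact (is_lim_seq_mult' (fun _ => a) u a l (is_lim_seq_const a) H). Qed.

Lemma is_lim_seq_cum (G : nat -> nat -> R) (g : nat -> R) k :
  (forall m, is_lim_seq (fun n => G n m) (g m)) -> is_lim_seq (fun n => cum (G n) k) (cum g k).
Proof.
  intros H. induction k as [|k IH]; simpl; [apply H | apply is_lim_seq_plus'; auto].
Qed.

Lemma is_lim_seq_shift (G : nat -> nat -> R) (g : nat -> R) k :
  (forall m, is_lim_seq (fun n => G n m) (g m)) -> is_lim_seq (fun n => shift (G n) k) (shift g k).
Proof. intros H. destruct k; simpl; [apply is_lim_seq_const | apply H]. Qed.

Lemma poisson_pmf_cvg lam (e : nat -> R) m :
  is_lim_seq e 0 -> is_lim_seq (fun n => poisson_pmf (lam + e n) m) (poisson_pmf lam m).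
Proof.
  intros He. apply (is_lim_seq_continuous (fun x => poisson_pmf x m)).
  - unfold poisson_pmf. reg.
  - replace (Finite lam) with (Rbar_plus lam 0) by (simpl; f_equal; ring).
    apply is_lim_seq_plus'; [apply is_lim_seq_const | exact He].
Qed.

Lemma fin_pmf_cvg lam p k :
  0 <= lam -> prob_seq p -> ex_series p ->
  is_lim_seq (fun n => fin_pmf lam p n k) (ebs_pmf lam p k).
Proof.
  intros Hl Hp Hs.
  assert (Hex : ex_finite_lim_seq (fun n => fin_pmf lam p n k)).
  { apply ex_finite_lim_seq_of_increments.
    apply (@ex_series_le R_AbsRing R_CompleteNormedModule _
             (fun n => p n * cum (poisson_pmf lam) k));
      [|apply ex_series_scal_r; exact Hs].
    intros n. change norm with Rabs. rewrite fin_pmf_S. unfold mix.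
    replace ((1 - p n) * fin_pmf lam p n k + p n * shift (fin_pmf lam p n) k - fin_pmf lam p n k)
      with (p n * (shift (fin_pmf lam p n) k - fin_pmf lam p n k)) by ring.
    destruct (Hp n). rewrite Rabs_mult, Rabs_pos_eq by lra.
    apply Rmult_le_compat_l; [lra|]. apply Rabs_le.
    assert (H1 := fin_pmf_abs_le_cum lam p n k Hl Hp).
    assert (H2 : Rabs (shift (fin_pmf lam p n) k) <= cum (poisson_pmf lam) k).
    { destruct k as [|k]; cbn [shift];
        [rewrite Rabs_R0; apply cum_nonneg; intros; apply poisson_pmf_nonneg, Hl|].
      apply Rle_trans with (cum (poisson_pmf lam) k); [apply fin_pmf_abs_le_cum; auto|].
      apply cum_le_S. intros; apply poisson_pmf_nonneg, Hl. }
    assert (0 <= fin_pmf lam p n k) by (apply fin_pmf_nonneg; auto).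
    assert (0 <= shift (fin_pmf lam p n) k)
      by (apply shift_nonneg; intros; apply fin_pmf_nonneg; auto).
    rewrite Rabs_pos_eq in H1, H2 by assumption. lra. }
  destruct Hex as [l Hlim]. unfold ebs_pmf. rewrite (is_lim_seq_unique _ _ Hlim). exact Hlim.
Qed.

Lemma fin_pmf_perturbed_cvg lam p (e : nat -> R) k :
  0 <= lam -> prob_seq p -> ex_series p -> is_lim_seq e 0 ->
  is_lim_seq (fun n => fin_pmf (lam + e n) p n k) (ebs_pmf lam p k).
Proof.
  intros Hl Hp Hs He.
  set (err n := cum (fun m => Rabs (poisson_pmf (lam + e n) m - poisson_pmf lam m)) k).
  assert (Herr : is_lim_seq err 0).
  { rewrite <- (cum_zero k). apply is_lim_seq_cum. intros m.
    apply -> is_lim_seq_abs_0. replace 0 with (poisson_pmf lam m - poisson_pmf lam m) by ring.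
    apply is_lim_seq_minus'; [apply poisson_pmf_cvg; exact He | apply is_lim_seq_const]. }
  assert (Hdiff : is_lim_seq (fun n => fin_pmf (lam + e n) p n k - fin_pmf lam p n k) 0).
  { apply is_lim_seq_abs_0.
    apply is_lim_seq_le_le with (fun _ => 0) err; [|apply is_lim_seq_const | exact Herr].
    intros n. split; [apply Rabs_pos | apply fin_pmf_diff_le_poisson_diff; exact Hp]. }
  replace (ebs_pmf lam p k) with (ebs_pmf lam p k + 0) by ring.
  apply is_lim_seq_ext
    with (fun n => fin_pmf lam p n k + (fin_pmf (lam + e n) p n k - fin_pmf lam p n k));
    [intros; ring|].
  apply is_lim_seq_plus'; [apply fin_pmf_cvg; auto | exact Hdiff].
Qed.

Lemma is_series_zero_at p i : ex_series p -> is_series (zero_at i p) (Series p - p i).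
Proof.
  intros Hs. apply is_series_of_sum_below.
  apply is_lim_seq_ext_loc with (fun n => sum_below n p - p i).
  - exists (S i). intros n Hn. symmetry. apply sum_below_zero_at. lia.
  - apply is_lim_seq_minus'; [apply is_lim_seq_sum_below; exact Hs | apply is_lim_seq_const].
Qed.

Lemma ex_series_zero_at p i : ex_series p -> ex_series (zero_at i p).
Proof. intros Hs. eexists. apply is_series_zero_at. exact Hs. Qed.

Lemma ebs_mean_zero_at lam p i :
  ex_series p -> ebs_mean lam (zero_at i p) = ebs_mean lam p - p i.
Proof.
  intros Hs. unfold ebs_mean. rewrite (is_series_unique _ _ (is_series_zero_at p i Hs)). ring.
Qed.

Definition tail (p : nat -> R) (n : nat) : R := Series p - sum_below n p.

Section Limit.

Variables (lam : R) (p : nat -> R).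
Hypotheses (Hlam : 0 <= lam) (Hp : prob_seq p) (Hs : ex_series p).

Local Notation f := (ebs_pmf lam p).
Local Notation mu := (ebs_mean lam p).

(* The Poisson part absorbs the tail, so every approximation has mean exactly [mu]. *)
Local Notation approx q n := (fin_pmf (lam + tail p n) q n).

Lemma tail_nonneg n : 0 <= tail p n.
Proof.
  unfold tail. assert (sum_below n p <= Series p); [|lra].
  apply sum_below_le_Series; [intros; apply Hp | exact Hs].
Qed.

Lemma tail_cvg : is_lim_seq (tail p) 0.
Proof.
  replace 0 with (Series p - Series p) by ring. unfold tail.
  apply is_lim_seq_minus'; [apply is_lim_seq_const | apply is_lim_seq_sum_below; exact Hs].
Qed.

Lemma approx_mean n : lam + tail p n + sum_below n p = mu.
Proof. unfold tail, ebs_mean. ring. Qed.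

Lemma approx_lam_nonneg n : 0 <= lam + tail p n.
Proof. assert (H := tail_nonneg n). lra. Qed.

Lemma approx_cvg q k :
  prob_seq q -> ex_series q -> is_lim_seq (fun n => approx q n k) (ebs_pmf lam q k).
Proof. intros Hq Hsq. apply fin_pmf_perturbed_cvg; auto. exact tail_cvg. Qed.

Lemma approx_shift_cvg q k :
  prob_seq q -> ex_series q ->
  is_lim_seq (fun n => shift (approx q n) k) (shift (ebs_pmf lam q) k).
Proof.
  intros Hq Hsq. apply (is_lim_seq_shift (fun n => approx q n)). intros. apply approx_cvg; auto.
Qed.

Lemma ebs_pmf_nonneg k : 0 <= f k.
Proof.
  apply (is_lim_seq_le' (fun _ => 0) (fun n => fin_pmf lam p n k));
    [intros; apply fin_pmf_nonneg; auto | apply is_lim_seq_const | apply fin_pmf_cvg; auto].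
Qed.

Lemma ebs_pmf_shift_le k : INR k <= mu -> shift f k <= f k.
Proof.
  intros Hk. apply (is_lim_seq_le' (fun n => shift (approx p n) k) (fun n => approx p n k));
    [|apply approx_shift_cvg; auto | apply approx_cvg; auto].
  intros n. apply fin_pmf_shift_le; [apply approx_lam_nonneg | exact Hp | now rewrite approx_mean].
Qed.

Lemma ebs_pmf_size_bias_gap_nonneg k : INR k <= mu -> mu * shift f k <= INR k * f k.
Proof.
  intros Hk.
  apply (is_lim_seq_le' (fun n => mu * shift (approx p n) k) (fun n => INR k * approx p n k)).
  - intros n. rewrite <- (approx_mean n).
    apply fin_pmf_size_bias_gap_nonneg;
      [apply approx_lam_nonneg | exact Hp | now rewrite approx_mean].
  - apply is_lim_seq_scal_l'. apply approx_shift_cvg; auto.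
  - apply is_lim_seq_scal_l'. apply approx_cvg; auto.
Qed.

Lemma ebs_pmf_size_bias_gap_ge_term k i :
  INR k <= mu ->
  p i ^ 2 * shift (delta (ebs_pmf lam (zero_at i p))) k <= INR k * f k - mu * shift f k.
Proof.
  intros Hk. set (g := ebs_pmf lam (zero_at i p)).
  assert (Hi := prob_seq_zero_at i p Hp). assert (His := ex_series_zero_at p i Hs).
  assert (Hg : forall m, is_lim_seq (fun n => shift (approx (zero_at i p) n) m) (shift g m)).
  { intros. apply approx_shift_cvg; auto. }
  enough (H : Rbar_le (p i ^ 2 * shift (delta g) k) (INR k * f k - mu * shift f k)) by exact H.
  apply (is_lim_seq_le_loc
           (fun n => p i ^ 2 * shift (delta (approx (zero_at i p) n)) k)
           (fun n => INR k * approx p n k - mu * shift (approx p n) k)).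
  - exists (S i). intros n Hn. rewrite <- (approx_mean n).
    apply fin_pmf_size_bias_gap_ge_term;
      [apply approx_lam_nonneg | exact Hp | now rewrite approx_mean | lia].
  - rewrite shift_delta.
    apply is_lim_seq_ext with
      (fun n => p i ^ 2 * (shift (approx (zero_at i p) n) k
                           - shift (shift (approx (zero_at i p) n)) k));
      [intros; rewrite shift_delta; reflexivity|].
    apply is_lim_seq_scal_l', is_lim_seq_minus'; [apply Hg|].
    apply (is_lim_seq_shift (fun n => shift (approx (zero_at i p) n))). exact Hg.
  - apply is_lim_seq_minus'; apply is_lim_seq_scal_l';
      [apply approx_cvg | apply approx_shift_cvg]; auto.
Qed.

Lemma ebs_pmf_ratio_le_mean j : mu <= INR j -> INR (S j) * f (S j) <= mu * f j.
Proof.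
  intros Hj.
  apply (is_lim_seq_le' (fun n => INR (S j) * approx p n (S j)) (fun n => mu * approx p n j)).
  - intros n. rewrite <- (approx_mean n).
    apply fin_pmf_ratio_le_mean; [apply approx_lam_nonneg | exact Hp | now rewrite approx_mean].
  - apply is_lim_seq_scal_l'. apply approx_cvg; auto.
  - apply is_lim_seq_scal_l'. apply approx_cvg; auto.
Qed.

Lemma ebs_pmf_ratio_le_mean_plus_bound j b :
  b <= 1 -> (forall i, p i <= b) -> mu + b <= INR j + 1 ->
  INR (S j) * f (S j) <= (mu + b) * f j.
Proof.
  intros Hb1 Hb Hj.
  apply (is_lim_seq_le' (fun n => INR (S j) * approx p n (S j)) (fun n => (mu + b) * approx p n j)).
  - intros n. rewrite <- (approx_mean n).
    apply fin_pmf_ratio_le_mean_plus_bound; auto;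
      [apply approx_lam_nonneg | now rewrite approx_mean].
  - apply is_lim_seq_scal_l'. apply approx_cvg; auto.
  - apply is_lim_seq_scal_l'. apply approx_cvg; auto.
Qed.

Lemma ebs_pmf_pos_below J : mu < INR (S J) -> exists j, (j <= J)%nat /\ 0 < f j.
Proof.
  intros HJ.
  assert (Hmass : (INR (S J) - mu) * exp (- mu) <= cum (cum f) J).
  { apply (is_lim_seq_le' (fun _ => (INR (S J) - mu) * exp (- mu))
                           (fun n => cum (cum (approx p n)) J));
      [|apply is_lim_seq_const|].
    - intros n. rewrite <- (approx_mean n).
      apply fin_pmf_cum_cum_lower; [apply approx_lam_nonneg | exact Hp | rewrite approx_mean; lra].
    - apply is_lim_seq_cum. intros m. apply is_lim_seq_cum. intros. apply approx_cvg; auto. }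
  assert (0 < (INR (S J) - mu) * exp (- mu)) by (apply Rmult_lt_0_compat; [lra | apply exp_pos]).
  destruct (cum_pos_witness (cum f) J ltac:(lra)) as [j [Hj Hpos]].
  destruct (cum_pos_witness f j Hpos) as [j' [Hj' Hpos']].
  exists j'. split; [lia | exact Hpos'].
Qed.

End Limit.

(** * Leading modes *)

Definition leading_mode (g : nat -> R) (m : nat) : Prop := shift g m <= g m /\ g (S m) < g m.

Lemma nondecreasing_upto (g : nat -> R) K j :
  (forall l, (l < K)%nat -> g l <= g (S l)) -> (j <= K)%nat -> g j <= g K.
Proof.
  intros H Hj. induction Hj as [|K Hj IH]; [lra|].
  apply Rle_trans with (g K); [apply IH; intros; apply H; lia | apply H; lia].
Qed.

Lemma last_argmax (g : nat -> R) K :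
  exists m, (m <= K)%nat /\ (forall i, (i <= K)%nat -> g i <= g m) /\
            (forall i, (m < i <= K)%nat -> g i < g m).
Proof.
  induction K as [|K [m [Hm [Hmax Hlast]]]].
  - exists O. repeat split; [lia | intros i Hi; replace i with O by lia; lra | intros; lia].
  - destruct (Rle_dec (g m) (g (S K))) as [Hup|Hdown].
    + exists (S K). repeat split; [lia| |intros; lia].
      intros i Hi. destruct (Nat.eq_dec i (S K)) as [->|Hne]; [lra|].
      apply Rle_trans with (g m); [apply Hmax; lia | exact Hup].
    + exists m. repeat split; [lia| |].
      * intros i Hi. destruct (Nat.eq_dec i (S K)) as [->|Hne]; [lra | apply Hmax; lia].
      * intros i Hi. destruct (Nat.eq_dec i (S K)) as [->|Hne]; [lra | apply Hlast; lia].
Qed.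

Lemma leading_mode_ge (g : nat -> R) k m :
  (forall l, (l < k)%nat -> g l <= g (S l)) -> leading_mode g m -> (k <= m)%nat.
Proof.
  intros H [_ Hdown]. destruct (le_lt_dec k m) as [Hkm|Hmk]; [exact Hkm|].
  specialize (H m Hmk). lra.
Qed.

Section EventualDecay.

Variables (g : nat -> R) (c : R) (J : nat).
Hypotheses (Hg : forall m, 0 <= g m) (HcJ : c < INR (S J)).
Hypothesis Hdecay : forall j, (J <= j)%nat -> INR (S j) * g (S j) <= c * g j.

Lemma decay_strict j : (J <= j)%nat -> 0 < g j -> g (S j) < g j.
Proof.
  intros Hj Hpos. assert (INR (S J) <= INR (S j)) by (apply le_INR; lia).
  assert (Hd := Hdecay j Hj). assert (0 <= g (S j)) by apply Hg.
  assert (c * g j < INR (S j) * g j) by (apply Rmult_lt_compat_r; lra).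
  apply Rmult_lt_reg_l with (INR (S j)); [apply lt_0_INR; lia | lra].
Qed.

Lemma leading_mode_le m : leading_mode g m -> (m <= J)%nat.
Proof.
  intros [Hup Hdown]. destruct (le_lt_dec m J) as [HmJ|HJm]; [exact HmJ|].
  destruct m as [|j]; [lia|]. cbn [shift] in Hup.
  assert (0 < g (S j)) by (assert (0 <= g (S (S j))) by apply Hg; lra).
  assert (0 < g j).
  { destruct (Rlt_dec 0 (g j)) as [Hj|Hj]; [exact Hj|].
    assert (Hd := Hdecay j ltac:(lia)). assert (0 < INR (S j)) by (apply lt_0_INR; lia).
    assert (Hz : g j = 0) by (specialize (Hg j); lra). rewrite Hz, Rmult_0_r in Hd.
    assert (0 < INR (S j) * g (S j)) by (apply Rmult_lt_0_compat; lra). lra. }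
  assert (g (S j) < g j) by (apply decay_strict; [lia | assumption]). lra.
Qed.

Lemma leading_mode_exists : (exists j, 0 < g j) -> exists m, leading_mode g m.
Proof.
  intros [j0 Hj0]. destruct (last_argmax g (max J j0)) as [m [Hm [Hmax Hlast]]].
  assert (Hpos : 0 < g m) by (assert (g j0 <= g m) by (apply Hmax; lia); lra).
  exists m. split.
  - destruct m as [|m]; cbn [shift]; [lra | apply Hmax; lia].
  - destruct (le_lt_dec (S m) (max J j0)) as [Hin|Hout]; [apply Hlast; lia|].
    apply decay_strict; [lia | exact Hpos].
Qed.

End EventualDecay.

Lemma m_plus_spec lam p :
  (exists m, leading_mode (ebs_pmf lam p) m) -> leading_mode (ebs_pmf lam p) (m_plus lam p).
Proof. intros [m Hm]. unfold m_plus. apply epsilon_spec. exists m. exact Hm. Qed.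

Lemma m_minus_tie lam p :
  shift (ebs_pmf lam p) (m_plus lam p) = ebs_pmf lam p (m_plus lam p) ->
  m_minus lam p = (m_plus lam p - 1)%nat.
Proof.
  intros H. unfold m_minus. destruct (excluded_middle_informative _) as [_|Hne]; [reflexivity|].
  exfalso. apply Hne. exact H.
Qed.

Lemma m_minus_no_tie lam p :
  shift (ebs_pmf lam p) (m_plus lam p) <> ebs_pmf lam p (m_plus lam p) ->
  m_minus lam p = m_plus lam p.
Proof.
  intros H. unfold m_minus. destruct (excluded_middle_informative _) as [Heq|_]; [|reflexivity].
  exfalso. apply H. exact Heq.
Qed.

Section Modes.

Variables (lam : R) (p : nat -> R).
Hypotheses (Hlam : 0 <= lam) (Hp : prob_seq p) (Hs : ex_series p).

Local Notation f := (ebs_pmf lam p).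
Local Notation mu := (ebs_mean lam p).

Lemma m_plus_leading : leading_mode f (m_plus lam p).
Proof.
  apply m_plus_spec. destruct (INR_unbounded mu) as [J HJ].
  apply (leading_mode_exists f mu J).
  - apply ebs_pmf_nonneg; assumption.
  - rewrite S_INR. lra.
  - intros j Hj. apply ebs_pmf_ratio_le_mean; auto.
    apply Rle_trans with (INR J); [lra | apply le_INR; exact Hj].
  - destruct (ebs_pmf_pos_below lam p Hlam Hp Hs J) as [j [_ Hj]]; [rewrite S_INR; lra|].
    exists j. exact Hj.
Qed.

Lemma m_plus_ge k : INR k <= mu -> (k <= m_plus lam p)%nat.
Proof.
  intros Hk. apply (leading_mode_ge f); [|exact m_plus_leading].
  intros l Hl. apply (ebs_pmf_shift_le lam p Hlam Hp Hs (S l)).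
  apply Rle_trans with (INR k); [apply le_INR; lia | exact Hk].
Qed.

Lemma m_plus_le J : mu <= INR J -> (m_plus lam p <= J)%nat.
Proof.
  intros HJ. apply (leading_mode_le f mu J); [apply ebs_pmf_nonneg; auto | | |exact m_plus_leading].
  - rewrite S_INR. lra.
  - intros j Hj. apply ebs_pmf_ratio_le_mean; auto.
    apply Rle_trans with (INR J); [exact HJ | apply le_INR; exact Hj].
Qed.

Lemma m_plus_le_of_bound J b :
  b <= 1 -> (forall i, p i <= b) -> mu + b < INR (S J) -> (m_plus lam p <= J)%nat.
Proof.
  intros Hb1 Hb HJ.
  apply (leading_mode_le f (mu + b) J);
    [apply ebs_pmf_nonneg; auto | exact HJ | |exact m_plus_leading].
  intros j Hj. apply ebs_pmf_ratio_le_mean_plus_bound; auto.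
  assert (INR J <= INR j) by (apply le_INR; exact Hj). rewrite S_INR in HJ. lra.
Qed.

Lemma ebs_pmf_shift_lt_floor k : INR k < mu < INR k + 1 -> shift f k < f k.
Proof.
  intros [Hk1 Hk2]. assert (Hshift := shift_nonneg f k (ebs_pmf_nonneg lam p Hlam Hp Hs)).
  destruct (Rlt_dec 0 (shift f k)) as [Hpos|Hzero].
  - assert (H := ebs_pmf_size_bias_gap_nonneg lam p Hlam Hp Hs k ltac:(lra)).
    assert (INR k * shift f k < mu * shift f k) by (apply Rmult_lt_compat_r; lra).
    assert (0 <= INR k) by apply pos_INR. nra.
  - destruct (ebs_pmf_pos_below lam p Hlam Hp Hs k) as [j [Hj Hfj]]; [rewrite S_INR; lra|].
    assert (f j <= f k); [|lra].
    apply nondecreasing_upto; [|exact Hj]. intros l Hl.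
    apply (ebs_pmf_shift_le lam p Hlam Hp Hs (S l)).
    apply Rle_trans with (INR k); [apply le_INR; lia | lra].
Qed.

Lemma m_plus_integer_mean k : mu = INR k -> m_plus lam p = k.
Proof. intros Hk. apply Nat.le_antisymm; [apply m_plus_le | apply m_plus_ge]; lra. Qed.

Lemma modes_fractional_mean k :
  INR k < mu < INR k + 1 ->
  (k <= m_minus lam p)%nat /\ (m_minus lam p <= m_plus lam p)%nat /\ (m_plus lam p <= k + 1)%nat.
Proof.
  intros Hk. assert (Hge := m_plus_ge k ltac:(lra)).
  assert (Hle := m_plus_le (S k) ltac:(rewrite S_INR; lra)).
  destruct (Req_dec (shift f (m_plus lam p)) (f (m_plus lam p))) as [Htie|Hnotie].
  - assert (m_plus lam p <> k).
    { intros E. rewrite E in Htie. assert (H := ebs_pmf_shift_lt_floor k Hk). lra. }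
    rewrite (m_minus_tie lam p Htie). lia.
  - rewrite (m_minus_no_tie lam p Hnotie). lia.
Qed.

End Modes.

Lemma m_plus_drop_first_le lam p k :
  in_nabla lam p -> ebs_mean lam p < INR k + 1 -> (m_plus lam (drop_first p) <= k)%nat.
Proof.
  intros Hnabla Hk. assert (Hp := in_nabla_prob_seq lam p Hnabla).
  destruct Hnabla as [Hlam [_ [Hanti [_ Hs]]]].
  assert (Hq : prob_seq (drop_first p))
    by (intros i; rewrite drop_first_zero_at; apply prob_seq_zero_at, Hp).
  assert (Hqs : ex_series (drop_first p)).
  { apply (ex_series_ext (zero_at O p)); [intros; symmetry; apply drop_first_zero_at|].
    apply ex_series_zero_at, Hs. }
  assert (Hqmean : ebs_mean lam (drop_first p) = ebs_mean lam p - p O).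
  { rewrite <- ebs_mean_zero_at by exact Hs. unfold ebs_mean. f_equal.
    apply Series_ext, drop_first_zero_at. }
  apply (m_plus_le_of_bound lam (drop_first p) Hlam Hq Hqs k (p O)); [apply Hp| |].
  - intros [|i]; unfold drop_first; [apply Hp | apply antitone_le; [exact Hanti | lia]].
  - rewrite Hqmean, S_INR. lra.
Qed.

(** * The shifted Poisson configurations *)

Definition ones_below (a i : nat) : R := if Nat.ltb i a then 1 else 0.

Lemma fin_pmf_ones_below lam a n j :
  fin_pmf lam (ones_below a) n j
  = if Nat.ltb j (min n a) then 0 else poisson_pmf lam (j - min n a).
Proof.
  revert j. induction n as [|n IH]; intros j.
  - simpl. rewrite Nat.sub_0_r. reflexivity.
  - rewrite fin_pmf_S. unfold ones_below at 1. destruct (Nat.ltb_spec n a) as [Hna|Han].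
    + replace (min (S n) a) with (S n) by lia. replace (min n a) with n in IH by lia.
      unfold mix. rewrite Rminus_diag, Rmult_0_l, Rmult_1_l, Rplus_0_l.
      destruct j as [|j]; cbn [shift]; [reflexivity|]. rewrite IH. reflexivity.
    + replace (min (S n) a) with (min n a) by lia. rewrite <- IH.
      unfold mix. rewrite Rminus_0_r, Rmult_0_l, Rmult_1_l, Rplus_0_r. reflexivity.
Qed.

Lemma ebs_pmf_ones_below lam p a j :
  (forall i, p i = ones_below a i) ->
  ebs_pmf lam p j = if Nat.ltb j a then 0 else poisson_pmf lam (j - a).
Proof.
  intros Hpa. set (v := if Nat.ltb j a then 0 else poisson_pmf lam (j - a)).
  assert (H : is_lim_seq (fun n => fin_pmf lam p n j) v).
  { apply is_lim_seq_ext_loc with (fun _ => v); [|apply is_lim_seq_const].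
    exists a. intros n Hn.
    rewrite (fin_pmf_ext lam p (ones_below a)) by (intros; apply Hpa).
    rewrite fin_pmf_ones_below. replace (min n a) with a by lia. reflexivity. }
  unfold ebs_pmf. rewrite (is_lim_seq_unique _ _ H). reflexivity.
Qed.

Lemma sum_below_ones_below a n : sum_below n (ones_below a) = INR (min n a).
Proof.
  induction n as [|n IH]; [reflexivity|]. simpl sum_below. rewrite IH. unfold ones_below.
  destruct (Nat.ltb_spec n a).
  - replace (min (S n) a) with (S (min n a)) by lia. rewrite S_INR. ring.
  - replace (min (S n) a) with (min n a) by lia. ring.
Qed.

Lemma Series_ones_below p a : (forall i, p i = ones_below a i) -> Series p = INR a.
Proof.
  intros Hpa. apply is_series_unique, is_series_of_sum_below.
  apply is_lim_seq_ext_loc with (fun _ => INR a); [|apply is_lim_seq_const].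
  exists a. intros n Hn.
  rewrite (sum_below_ext n p (ones_below a)), sum_below_ones_below by (intros; apply Hpa).
  f_equal. lia.
Qed.

Lemma zero_one_antitone_ones_below (p : nat -> R) N :
  (forall i, p i = 0 \/ p i = 1) -> (forall i, p (S i) <= p i) -> p N = 0 ->
  exists a, forall i, p i = ones_below a i.
Proof.
  intros H01 Hanti. induction N as [|N IH]; intros HN.
  - exists O. intros i. unfold ones_below. simpl.
    assert (p i <= p O) by (apply antitone_le; [exact Hanti | lia]).
    destruct (H01 i); lra.
  - destruct (H01 N) as [HN0|HN1]; [apply IH; exact HN0|].
    exists (S N). intros i. unfold ones_below. destruct (Nat.ltb_spec i (S N)).
    + assert (p N <= p i) by (apply antitone_le; [exact Hanti | lia]). destruct (H01 i); lra.
    + assert (p i <= p (S N)) by (apply antitone_le; [exact Hanti | lia]). destruct (H01 i); lra.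
Qed.

Lemma zero_one_summable_ones_below (p : nat -> R) :
  (forall i, p i = 0 \/ p i = 1) -> (forall i, p (S i) <= p i) -> ex_series p ->
  exists a, forall i, p i = ones_below a i.
Proof.
  intros H01 Hanti Hs. assert (Hlim := ex_series_lim_0 p Hs). apply is_lim_seq_spec in Hlim.
  destruct (Hlim (mkposreal (1 / 2) ltac:(lra))) as [N HN]. specialize (HN N (Nat.le_refl N)).
  apply (zero_one_antitone_ones_below p N H01 Hanti). simpl in HN.
  rewrite Rminus_0_r in HN. destruct (H01 N) as [H0|H1]; [exact H0|].
  rewrite H1, Rabs_R1 in HN. lra.
Qed.

Lemma ebs_pmf_shifted_poisson_tie lam p k a :
  (1 <= k)%nat -> (a < k)%nat -> lam = INR k - INR a -> (forall i, p i = ones_below a i) ->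
  shift (ebs_pmf lam p) k = ebs_pmf lam p k.
Proof.
  intros Hk Hak Hlam Hpa. destruct k as [|k]; [lia|]. cbn [shift].
  rewrite !(ebs_pmf_ones_below lam p a) by exact Hpa.
  destruct (Nat.ltb_spec k a) as [|_]; [lia|]. destruct (Nat.ltb_spec (S k) a) as [|_]; [lia|].
  replace (S k - a)%nat with (S (k - a)) by lia. rewrite poisson_pmf_S.
  assert (E : INR (S (k - a)) = lam) by (rewrite Hlam, <- minus_INR by lia; f_equal; lia).
  rewrite E. field. rewrite <- E. apply not_0_INR. lia.
Qed.

Section IntegerMean.

Variables (lam : R) (p : nat -> R).
Hypotheses (Hlam : 0 <= lam) (Hp : prob_seq p) (Hs : ex_series p).

Local Notation f := (ebs_pmf lam p).
Local Notation mu := (ebs_mean lam p).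

Lemma term_le_ebs_mean i : p i <= mu.
Proof.
  unfold ebs_mean.
  assert (p i <= sum_below (S i) p) by (apply sum_below_term_le; [intros; apply Hp | lia]).
  assert (sum_below (S i) p <= Series p)
    by (apply sum_below_le_Series; [intros; apply Hp | exact Hs]).
  lra.
Qed.

Lemma ebs_pmf_shift_lt_integer_mean k i :
  mu = INR k -> 0 < p i < 1 -> shift f k < f k.
Proof.
  intros Hk Hi. assert (Hpi := term_le_ebs_mean i).
  destruct k as [|k]; [simpl in Hk; lra|].
  set (g := ebs_pmf lam (zero_at i p)).
  assert (Hg : shift g k < g k).
  { apply ebs_pmf_shift_lt_floor;
      [exact Hlam | apply prob_seq_zero_at, Hp | apply ex_series_zero_at, Hs|].
    rewrite ebs_mean_zero_at, Hk, S_INR by exact Hs. lra. }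
  assert (Hterm := ebs_pmf_size_bias_gap_ge_term lam p Hlam Hp Hs (S k) i ltac:(lra)).
  fold g in Hterm. cbn [shift] in Hterm. unfold delta in Hterm. rewrite Hk in Hterm.
  assert (0 < p i ^ 2 * (g k - shift g k)) by (apply Rmult_lt_0_compat; [apply pow_lt | ]; lra).
  assert (0 < INR (S k)) by (apply lt_0_INR; lia).
  apply Rnot_le_lt. cbn [shift]. intros Hle.
  assert (INR (S k) * f (S k) <= INR (S k) * f k) by (apply Rmult_le_compat_l; lra).
  lra.
Qed.

Lemma ebs_pmf_shift_lt_integer_mean_nonexceptional k :
  (forall i, p (S i) <= p i) -> mu = INR k ->
  ~ (exists a : nat, (1 <= k)%nat /\ (a < k)%nat /\ lam = INR k - INR a /\
       (forall i, p i = if Nat.ltb i a then 1 else 0)) ->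
  shift f k < f k.
Proof.
  intros Hanti Hk Hnot.
  destruct (classic (exists i, 0 < p i < 1)) as [[i Hi]|Hno];
    [apply (ebs_pmf_shift_lt_integer_mean k i); assumption|].
  assert (H01 : forall i, p i = 0 \/ p i = 1).
  { intros i. destruct (Hp i). destruct (Req_dec (p i) 0); [left; assumption|].
    destruct (Req_dec (p i) 1); [right; assumption|]. exfalso. apply Hno. exists i. lra. }
  destruct (zero_one_summable_ones_below p H01 Hanti Hs) as [a Ha].
  unfold ebs_mean in Hk. rewrite (Series_ones_below p a Ha) in Hk.
  destruct (Rlt_dec 0 lam) as [Hpos|Hzero].
  - exfalso. apply Hnot. exists a.
    assert (Hak : (a < k)%nat) by (apply INR_lt; lra).
    repeat split; [lia | exact Hak | lra | exact Ha].
  - assert (Hl0 : lam = 0) by lra. assert (a = k) as -> by (apply INR_eq; lra).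
    rewrite (ebs_pmf_ones_below lam p k k Ha), Nat.ltb_irrefl, Nat.sub_diag, poisson_pmf_0.
    replace (exp (- lam)) with 1 by (rewrite Hl0, Ropp_0, exp_0; reflexivity).
    destruct k as [|k]; cbn [shift]; [lra|].
    rewrite (ebs_pmf_ones_below lam p (S k) k Ha), (proj2 (Nat.ltb_lt k (S k))) by lia. lra.
Qed.

End IntegerMean.

Theorem theorem2 (lam : R) (p : nat -> R) (Hnabla : in_nabla lam p) :
  (forall k : nat,
     INR k < ebs_mean lam p < INR k + 1 ->
     (m_plus lam (drop_first p) <= k)%nat /\ (k <= m_minus lam p)%nat /\
     (m_minus lam p <= m_plus lam p)%nat /\ (m_plus lam p <= k + 1)%nat) /\
  (forall k : nat,
     ebs_mean lam p = INR k ->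
     ((~ exists a : nat, (1 <= k)%nat /\ (a < k)%nat /\ lam = INR k - INR a /\
          (forall i, p i = if Nat.ltb i a then 1 else 0)) ->
        m_plus lam p = k /\ m_minus lam p = k) /\
     (forall a : nat, (1 <= k)%nat -> (a < k)%nat -> lam = INR k - INR a ->
          (forall i, p i = if Nat.ltb i a then 1 else 0) ->
        (forall j : nat, ebs_pmf lam p j =
            if Nat.ltb j a then 0 else poisson_pmf (INR k - INR a) (j - a)) /\
        m_plus lam p = k /\ m_minus lam p = (k - 1)%nat)).
Proof.
  assert (Hp := in_nabla_prob_seq lam p Hnabla).
  pose proof Hnabla as [Hlam [_ [Hanti [_ Hs]]]].
  split.
  - intros k Hk. split; [apply m_plus_drop_first_le; [exact Hnabla | lra]|].
    apply modes_fractional_mean; assumption.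
  - intros k Hk. assert (Hmp := m_plus_integer_mean lam p Hlam Hp Hs k Hk). split.
    + intros Hnot. split; [exact Hmp|].
      rewrite m_minus_no_tie, Hmp; [reflexivity|]. rewrite Hmp.
      assert (H := ebs_pmf_shift_lt_integer_mean_nonexceptional lam p Hlam Hp Hs k Hanti Hk Hnot).
      lra.
    + intros a Hk1 Hak Hlama Hpa. split; [|split; [exact Hmp|]].
      * intros j. rewrite <- Hlama. apply ebs_pmf_ones_below. exact Hpa.
      * rewrite m_minus_tie, Hmp; [reflexivity|]. rewrite Hmp.
        apply (ebs_pmf_shifted_poisson_tie lam p k a); assumption.
Qed.
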